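(* Let $n,d$ be positive integers. If $n\geq \frac{d^2}{2}$, then $d\in A_n$.
   Context: A walk is a finite sequence $z_0,z_1,\dots,z_l$ of Gaussian integers with $|z_{j+1}-z_j|=1$ for all $0\le j<l$. For natural numbers $n,d$, $n$ is called $d$-avoidable if there exists a walk $(z_j)$ and indices $r,s$ with $z_r-z_s=n$ such that $z_t-z_u\neq d$ for all indices $t,u$. $A_n$ denotes the set of all $d\in\mathbb{N}$ such that $n$ is not $d$-avoidable. *)

(* Gaussian integers represented as pairs of integers (Re, Im). *)
From Stdlib Require Import ZArith List.
Import ListNotations.
Open Scope Z_scope.

Definition gauss : Type := (Z * Z)%type.

Definition gsub (a b : gauss) : gauss := (fst a - fst b, snd a - snd b).

(* squared modulus; |z| = 1 iff |z|^2 = 1 *)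
Definition gnorm2 (a : gauss) : Z := fst a * fst a + snd a * snd a.

Definition gnat (m : nat) : gauss := (Z.of_nat m, 0).

Definition gat (w : list gauss) (j : nat) : gauss := nth j w (0, 0).

Definition is_walk (w : list gauss) : Prop :=
  w <> [] /\
  forall j : nat, (S j < length w)%nat -> gnorm2 (gsub (gat w (S j)) (gat w j)) = 1.

Definition avoidable (n d : nat) : Prop :=
  exists w : list gauss, is_walk w /\
    (exists r s : nat, (r < length w)%nat /\ (s < length w)%nat /\
        gsub (gat w r) (gat w s) = gnat n) /\
    (forall t u : nat, (t < length w)%nat -> (u < length w)%nat ->
        gsub (gat w t) (gat w u) <> gnat d).

Definition A (n : nat) (d : nat) : Prop := (0 < d)%nat /\ ~ avoidable n d.

(* Universal chord theorem for lattice walks: a walk from P to P + jD (j >= 1) has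
   two vertices differing by exactly D.  By induction on the length, if no shorter
   sub-walk does the job, the walk closes up on the cylinder of circumference jD and
   there it must meet its own translate by D.  That is a parity count: the number of
   horizontal steps crossing a fixed column is odd for a closed curve winding once,
   whereas counting the pairs (step of the curve in one column, step in the other)
   by which one is lower gives an even number, because each step of one curve lies
   below an even number of steps of the other as long as the curves are disjoint.

   For the theorem, refine a walk from P to P + n by a factor k, splitting every step
   into k unit steps: the refinement has a chord of length n, i.e. the original
   polygonal path has one of length n/k, and when d - 1 < n/k < d + 1 its endpoints
   round to vertices at distance exactly d.  Such a k exists precisely when the
   intervals (k(d-1), k(d+1)) cover n, which d^2 <= 2n guarantees. *)

From Stdlib Require Import ZArith List Lia Classical.
Open Scope Z_scope.

Fixpoint zsum (f : nat -> Z) (n : nat) : Z :=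
  match n with O => 0 | S n' => zsum f n' + f n' end.

Lemma zsum_ext (f g : nat -> Z) (n : nat) :
  (forall t, (t < n)%nat -> f t = g t) -> zsum f n = zsum g n.
Proof.
  induction n as [|n IH]; intros Hfg; cbn [zsum]; [reflexivity|].
  rewrite IH, Hfg; [reflexivity | lia | intros; apply Hfg; lia].
Qed.

Lemma zsum_add (f g : nat -> Z) (n : nat) :
  zsum (fun t => f t + g t) n = zsum f n + zsum g n.
Proof. induction n as [|n IH]; cbn [zsum]; [reflexivity|]. rewrite IH; ring. Qed.

Lemma zsum_mul_l (c : Z) (f : nat -> Z) (n : nat) :
  zsum (fun t => c * f t) n = c * zsum f n.
Proof. induction n as [|n IH]; cbn [zsum]; [ring|]. rewrite IH; ring. Qed.

Lemma zsum_mul_r (f : nat -> Z) (c : Z) (n : nat) :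
  zsum (fun t => f t * c) n = zsum f n * c.
Proof. induction n as [|n IH]; cbn [zsum]; [ring|]. rewrite IH; ring. Qed.

Lemma zsum_swap (F : nat -> nat -> Z) (n m : nat) :
  zsum (fun u => zsum (F u) m) n = zsum (fun t => zsum (fun u => F u t) n) m.
Proof.
  induction n as [|n IH]; cbn [zsum].
  - induction m as [|m IHm]; cbn [zsum]; [reflexivity|]. rewrite <- IHm; ring.
  - rewrite IH, <- zsum_add; reflexivity.
Qed.

Lemma zsum_even (f : nat -> Z) (n : nat) :
  (forall t, (t < n)%nat -> Z.Even (f t)) -> Z.Even (zsum f n).
Proof.
  induction n as [|n IH]; intros Hf; cbn [zsum]; [now exists 0|].
  destruct IH as [a Ha]; [intros; apply Hf; lia|].
  destruct (Hf n) as [b Hb]; [lia|]. exists (a + b); lia.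
Qed.

Lemma zsum_parity_telescope (f g : nat -> Z) (n : nat) :
  (forall t, (t < n)%nat -> Z.Even (g t - (f (S t) - f t))) ->
  Z.Even (zsum g n - (f n - f O)).
Proof.
  induction n as [|n IH]; intros Hg; cbn [zsum]; [exists 0; lia|].
  destruct IH as [a Ha]; [intros; apply Hg; lia|].
  destruct (Hg n) as [b Hb]; [lia|]. exists (a + b); lia.
Qed.

Lemma zsum_pairs_by_height (f g h : nat -> Z) (n : nat) :
  (forall u t, (u < n)%nat -> (t < n)%nat -> f u <> 0 -> g t <> 0 -> h u <> h t) ->
  zsum (fun u => f u * zsum (fun t => g t * Z.b2z (h t <? h u)) n) n
  + zsum (fun t => g t * zsum (fun u => f u * Z.b2z (h u <? h t)) n) n
  = zsum f n * zsum g n.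
Proof.
  intros Hh.
  rewrite (zsum_ext (fun t => g t * _) (fun t => zsum (fun u => f u * g t * Z.b2z (h u <? h t)) n))
    by (intros; rewrite <- zsum_mul_l; apply zsum_ext; intros; ring).
  rewrite <- (zsum_swap (fun u t => f u * g t * Z.b2z (h u <? h t))), <- zsum_add.
  rewrite <- zsum_mul_r. apply zsum_ext; intros u Hu.
  rewrite <- !zsum_mul_l, <- zsum_add. apply zsum_ext; intros t Ht.
  destruct (Z.eq_dec (f u) 0) as [->|Hfu]; [ring|].
  destruct (Z.eq_dec (g t) 0) as [->|Hgt]; [ring|].
  specialize (Hh u t Hu Ht Hfu Hgt).
  destruct (Z.ltb_spec (h t) (h u)), (Z.ltb_spec (h u) (h t)); cbn [Z.b2z]; lia.
Qed.

Lemma exists_min_index (h : nat -> Z) (L : nat) :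
  exists t0, (t0 <= L)%nat /\ forall t, (t <= L)%nat -> h t0 <= h t.
Proof.
  induction L as [|L [t0 [Ht0 Hmin]]].
  - exists O; split; [lia|]. intros t Ht. replace t with O by lia. lia.
  - destruct (Z.le_gt_cases (h t0) (h (S L))).
    + exists t0; split; [lia|]. intros t Ht.
      destruct (Nat.eq_dec t (S L)) as [->|]; [lia|]. apply Hmin; lia.
    + exists (S L); split; [lia|]. intros t Ht.
      destruct (Nat.eq_dec t (S L)) as [->|]; [lia|]. specialize (Hmin t ltac:(lia)); lia.
Qed.

Definition unit_step (p q : gauss) : Prop := gnorm2 (gsub q p) = 1.

Lemma unit_step_cases (p q : gauss) : unit_step p q ->
  q = (fst p + 1, snd p) \/ q = (fst p - 1, snd p) \/
  q = (fst p, snd p + 1) \/ q = (fst p, snd p - 1).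
Proof.
  destruct p as [a b], q as [c e]; unfold unit_step, gnorm2, gsub; cbn.
  intros H. set (x := c - a) in H. set (y := e - b) in H.
  assert (Hx : -1 <= x <= 1) by nia. assert (Hy : -1 <= y <= 1) by nia.
  assert (Hx' : x = -1 \/ x = 0 \/ x = 1) by lia.
  assert (Hy' : y = -1 \/ y = 0 \/ y = 1) by lia.
  destruct Hx' as [Hx'|[Hx'|Hx']], Hy' as [Hy'|[Hy'|Hy']];
    rewrite Hx', Hy' in H; try discriminate; unfold x, y in *.
  all: [> right; left | right; right; right | right; right; left | left];
    f_equal; lia.
Qed.

Lemma unit_step_sym (p q : gauss) : unit_step p q -> unit_step q p.
Proof. unfold unit_step, gnorm2, gsub; cbn. nia. Qed.

Definition walk (z : nat -> gauss) (L : nat) : Prop :=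
  forall t, (t < L)%nat -> unit_step (z t) (z (S t)).

Lemma walk_translate (z : nat -> gauss) (L : nat) (c : Z) :
  walk z L -> walk (fun t => (fst (z t) + c, snd (z t))) L.
Proof.
  intros Hw t Ht. specialize (Hw t Ht). unfold unit_step, gsub in *; cbn.
  replace (fst (z (S t)) + c - (fst (z t) + c)) with (fst (z (S t)) - fst (z t)) by ring.
  exact Hw.
Qed.

Lemma walk_segment (z : nat -> gauss) (L a b : nat) :
  walk z L -> (a <= L)%nat -> (b <= L)%nat ->
  exists z', walk z' (Nat.max a b - Nat.min a b) /\ z' O = z a /\
    z' (Nat.max a b - Nat.min a b)%nat = z b /\
    forall k, (k <= Nat.max a b - Nat.min a b)%nat -> exists i, (i <= L)%nat /\ z' k = z i.
Proof.
  intros Hw Ha Hb. destruct (Nat.le_ge_cases a b) as [Hab|Hab].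
  - exists (fun k => z (a + k)%nat).
    replace (Nat.max a b - Nat.min a b)%nat with (b - a)%nat by lia.
    split; [|split; [|split]].
    + intros k Hk. replace (a + S k)%nat with (S (a + k)) by lia. apply Hw; lia.
    + f_equal; lia.
    + f_equal; lia.
    + intros k Hk. exists (a + k)%nat; split; [lia | reflexivity].
  - exists (fun k => z (a - k)%nat).
    replace (Nat.max a b - Nat.min a b)%nat with (a - b)%nat by lia.
    split; [|split; [|split]].
    + intros k Hk. replace (a - k)%nat with (S (a - S k)) by lia.
      apply unit_step_sym, Hw; lia.
    + f_equal; lia.
    + f_equal; lia.
    + intros k Hk. exists (a - k)%nat; split; [lia | reflexivity].
Qed.

Definition chord (z : nat -> gauss) (L : nat) (D : Z) : Prop :=
  exists t u, (t <= L)%nat /\ (u <= L)%nat /\ z t = (fst (z u) + D, snd (z u)).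

Definition congr (N a b : Z) : bool := (a - b) mod N =? 0.

Lemma congr_spec (N a b : Z) : 0 < N -> congr N a b = true <-> exists m, a = b + m * N.
Proof.
  intros HN. unfold congr. rewrite Z.eqb_eq, Z.mod_divide by lia. split.
  - intros [m Hm]. exists m; lia.
  - intros [m Hm]. exists m; lia.
Qed.

Lemma congr_add_mul (N a b m : Z) : 0 < N -> congr N a (b + m * N) = congr N a b.
Proof.
  intros HN. unfold congr.
  replace (a - (b + m * N)) with (a - b + (- m) * N) by ring.
  rewrite Z.mod_add by lia. reflexivity.
Qed.

Lemma congr_add_mul_l (N a b m : Z) : 0 < N -> congr N (a + m * N) b = congr N a b.
Proof.
  intros HN. unfold congr.
  replace (a + m * N - b) with (a - b + m * N) by ring.
  rewrite Z.mod_add by lia. reflexivity.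
Qed.

Lemma congr_shift (N a b c : Z) : congr N (a + c) (b + c) = congr N a b.
Proof. unfold congr. f_equal. f_equal. ring. Qed.

(* [col_step z N x t = 1] iff step [t] is horizontal and, on the cylinder of
   circumference [N], it crosses the column between [x] and [x + 1]. *)
Definition col_step (z : nat -> gauss) (N x : Z) (t : nat) : Z :=
  Z.b2z ((snd (z t) =? snd (z (S t))) && congr N (Z.min (fst (z t)) (fst (z (S t)))) x).

Lemma col_step_01 (z : nat -> gauss) (N x : Z) (t : nat) :
  col_step z N x t = 0 \/ col_step z N x t = 1.
Proof. unfold col_step. destruct (_ && _)%bool; cbn; auto. Qed.

Lemma col_step_1 (z : nat -> gauss) (N x : Z) (t : nat) : 0 < N ->
  col_step z N x t = 1 ->
  exists t' m, (t' = t \/ t' = S t) /\ z t' = (x + m * N, snd (z t)) /\ snd (z (S t)) = snd (z t).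
Proof.
  intros HN. unfold col_step.
  destruct (Z.eqb_spec (snd (z t)) (snd (z (S t)))) as [Hy|]; [|discriminate].
  destruct (congr _ _ x) eqn:Hc; [|discriminate]. intros _.
  apply congr_spec in Hc as [m Hm]; [|exact HN].
  destruct (z t) as [a b] eqn:Et, (z (S t)) as [c e] eqn:Et'; cbn in *.
  destruct (Z.le_ge_cases a c).
  - exists t, m. rewrite Z.min_l in Hm by lia. rewrite Et. repeat split; auto. f_equal; lia.
  - exists (S t), m. rewrite Z.min_r in Hm by lia. rewrite Et'. repeat split; auto; f_equal; lia.
Qed.

(* Its parity is the index of the point [p + (1/2, -1/2)] with respect to the closed
   curve the walk traces on the cylinder, so it can only change where the curve passes. *)
Definition crossings (z : nat -> gauss) (L : nat) (N : Z) (p : gauss) : Z :=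
  zsum (fun t => col_step z N (fst p) t * Z.b2z (snd (z t) <? snd p)) L.

Definition on_trace (z : nat -> gauss) (L : nat) (N : Z) (p : gauss) : Prop :=
  exists t m, (t <= L)%nat /\ p = (fst (z t) + m * N, snd (z t)).

Lemma Z_div_succ_sub (N u : Z) : 0 < N ->
  (u + 1) / N - u / N = Z.b2z ((u + 1) mod N =? 0).
Proof.
  intros HN. pose proof (Z.div_mod u N ltac:(lia)) as Hu.
  pose proof (Z.mod_pos_bound u N HN) as Hb.
  destruct (Z.eq_dec (u mod N + 1) N) as [E|E].
  - rewrite <- (Z.div_unique (u + 1) N (u / N + 1) 0), <- (Z.mod_unique (u + 1) N (u / N + 1) 0)
      by lia. cbn. lia.
  - rewrite <- (Z.div_unique (u + 1) N (u / N) (u mod N + 1)),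
      <- (Z.mod_unique (u + 1) N (u / N) (u mod N + 1)) by lia.
    destruct (Z.eqb_spec (u mod N + 1) 0); cbn; lia.
Qed.

Ltac even_closed := apply Z.even_spec; reflexivity.

Section Cylinder.

Variables (z : nat -> gauss) (L : nat) (N : Z).
Hypotheses (HN : 0 < N) (Hw : walk z L)
  (Hclosed : z L = (fst (z O) + N, snd (z O))).

Lemma col_steps_odd (x : Z) : Z.Odd (zsum (col_step z N x) L).
Proof.
  set (G := fun t => (fst (z t) - x - 1) / N).
  assert (Hpar := zsum_parity_telescope G (col_step z N x) L).
  assert (HG : G L - G O = 1).
  { unfold G. rewrite Hclosed; cbn.
    replace (fst (z O) + N - x - 1) with (fst (z O) - x - 1 + 1 * N) by ring.
    rewrite Z.div_add by lia. ring. }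
  destruct Hpar as [k Hk].
  - intros t Ht. unfold G, col_step. destruct (z t) as [a b] eqn:Et.
    destruct (unit_step_cases _ _ (Hw t Ht)) as [E|[E|[E|E]]]; rewrite Et in E; rewrite E;
      cbn [fst snd].
    + rewrite Z.eqb_refl, Z.min_l by lia. unfold congr.
      pose proof (Z_div_succ_sub N (a - x - 1) HN) as Hd.
      replace (a - x - 1 + 1) with (a - x) in Hd by ring.
      replace (a + 1 - x - 1) with (a - x) by ring.
      exists 0. cbn [andb]. lia.
    + rewrite Z.eqb_refl, Z.min_r by lia. unfold congr.
      pose proof (Z_div_succ_sub N (a - 1 - x - 1) HN) as Hd.
      replace (a - 1 - x - 1 + 1) with (a - x - 1) in Hd by ring.
      exists (Z.b2z ((a - 1 - x) mod N =? 0)). cbn [andb].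
      replace (a - 1 - x) with (a - x - 1) in * by ring. lia.
    + rewrite (proj2 (Z.eqb_neq b (b + 1))) by lia. exists 0. cbn. lia.
    + rewrite (proj2 (Z.eqb_neq b (b - 1))) by lia. exists 0. cbn. lia.
  - exists k. lia.
Qed.


Lemma crossings_periodic (x m y : Z) :
  crossings z L N (x + m * N, y) = crossings z L N (x, y).
Proof.
  unfold crossings, col_step. apply zsum_ext; intros t Ht. cbn [fst snd].
  rewrite congr_add_mul by exact HN. reflexivity.
Qed.

Lemma crossings_up (x y : Z) :
  ~ on_trace z L N (x, y) -> crossings z L N (x, y + 1) = crossings z L N (x, y).
Proof.
  intros Hoff. unfold crossings. apply zsum_ext; intros t Ht. cbn [fst snd].
  destruct (col_step_01 z N x t) as [E|E]; rewrite E; [ring|].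
  destruct (col_step_1 z N x t HN E) as [t' [m [Ht' [Ez Hy]]]].
  destruct (Z.ltb_spec (snd (z t)) (y + 1)), (Z.ltb_spec (snd (z t)) y); cbn; try lia.
  exfalso. apply Hoff. exists t', (- m). split; [lia|]. rewrite Ez; cbn. f_equal; lia.
Qed.

Lemma crossings_right_parity (x y : Z) : ~ on_trace z L N (x + 1, y) ->
  Z.Even (crossings z L N (x, y) + crossings z L N (x + 1, y)).
Proof.
  intros Hoff.
  set (s := fun t => Z.b2z (congr N (fst (z t)) (x + 1) && (snd (z t) <? y))).
  assert (Hs : s L = s O).
  { unfold s. rewrite Hclosed; cbn [fst snd].
    replace (fst (z O) + N) with (fst (z O) + 1 * N) by ring.
    rewrite congr_add_mul_l by exact HN. reflexivity. }
  unfold crossings; cbn [fst snd]. rewrite <- zsum_add.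
  destruct (zsum_parity_telescope s
    (fun t => col_step z N x t * Z.b2z (snd (z t) <? y)
              + col_step z N (x + 1) t * Z.b2z (snd (z t) <? y)) L) as [k Hk].
  2:{ exists k. lia. }
  intros t Ht. unfold s, col_step. destruct (z t) as [a b] eqn:Et.
  destruct (unit_step_cases _ _ (Hw t Ht)) as [E|[E|[E|E]]]; rewrite Et in E; rewrite E;
    cbn [fst snd].
  - rewrite Z.eqb_refl, Z.min_l, congr_shift by lia.
    destruct (congr N a x), (congr N a (x + 1)), (b <? y); even_closed.
  - rewrite Z.eqb_refl, Z.min_r by lia.
    rewrite <- (congr_shift N (a - 1) x 1). replace (a - 1 + 1) with a by ring.
    destruct (congr N a (x + 1)), (congr N (a - 1) (x + 1)), (b <? y); even_closed.
  - rewrite (proj2 (Z.eqb_neq b (b + 1))) by lia.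
    destruct (congr N a (x + 1)) eqn:Hc; [|even_closed].
    destruct (Z.ltb_spec (b + 1) y), (Z.ltb_spec b y); try lia; try even_closed.
    exfalso. apply Hoff. apply congr_spec in Hc as [m Hm]; [|exact HN].
    exists (S t), (- m). split; [lia|]. rewrite E; cbn. f_equal; lia.
  - rewrite (proj2 (Z.eqb_neq b (b - 1))) by lia.
    destruct (congr N a (x + 1)) eqn:Hc; [|even_closed].
    destruct (Z.ltb_spec (b - 1) y), (Z.ltb_spec b y); try lia; try even_closed.
    exfalso. apply Hoff. apply congr_spec in Hc as [m Hm]; [|exact HN].
    exists t, (- m). split; [lia|]. rewrite Et; cbn. f_equal; lia.
Qed.

Lemma crossings_step_parity (p q : gauss) : unit_step p q ->
  ~ on_trace z L N p -> ~ on_trace z L N q ->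
  Z.Even (crossings z L N q - crossings z L N p).
Proof.
  destruct p as [x y]. intros Hs Hp Hq.
  destruct (unit_step_cases _ _ Hs) as [E|[E|[E|E]]]; subst q; cbn [fst snd] in *.
  - destruct (crossings_right_parity x y Hq) as [k Hk].
    exists (k - crossings z L N (x, y)). lia.
  - assert (Hp' : ~ on_trace z L N (x - 1 + 1, y)) by now replace (x - 1 + 1) with x by ring.
    destruct (crossings_right_parity (x - 1) y Hp') as [k Hk].
    replace (x - 1 + 1) with x in Hk by ring.
    exists (k - crossings z L N (x, y)). lia.
  - rewrite crossings_up by exact Hp. exists 0. lia.
  - rewrite <- (crossings_up x (y - 1)) by exact Hq. replace (y - 1 + 1) with y by ring.
    exists 0. lia.
Qed.

Lemma crossings_parity_along (w : nat -> gauss) (K : nat) : walk w K ->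
  (forall m, (m <= K)%nat -> ~ on_trace z L N (w m)) ->
  forall m, (m <= K)%nat -> Z.Even (crossings z L N (w m) - crossings z L N (w O)).
Proof.
  intros Hw' Hoff m. induction m as [|m IH]; intros Hm; [exists 0; lia|].
  destruct IH as [k1 Hk1]; [lia|].
  destruct (crossings_step_parity (w m) (w (S m))) as [k2 Hk2];
    [apply Hw'; lia | apply Hoff; lia | apply Hoff; lia |].
  exists (k1 + k2). lia.
Qed.

Lemma crossings_translate_even (E : Z) :
  (forall u, (u <= L)%nat -> ~ on_trace z L N (fst (z u) + E, snd (z u))) ->
  forall u, (u <= L)%nat -> Z.Even (crossings z L N (fst (z u) + E, snd (z u))).
Proof.
  intros Hoff u Hu.
  destruct (exists_min_index (fun t => snd (z t)) L) as [t0 [Ht0 Hmin]].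
  assert (Hlow : crossings z L N (fst (z t0) + E, snd (z t0)) = 0).
  { unfold crossings. transitivity (zsum (fun t => 0 * col_step z N (fst (z t0) + E) t) L).
    - apply zsum_ext; intros t Ht. cbn [fst snd].
      destruct (Z.ltb_spec (snd (z t)) (snd (z t0))); [specialize (Hmin t ltac:(lia)); lia|].
      cbn. ring.
    - rewrite zsum_mul_l. ring. }
  set (w := fun t => (fst (z t) + E, snd (z t))).
  pose proof (crossings_parity_along w L (walk_translate z L E Hw) Hoff) as Hpar.
  destruct (Hpar u Hu) as [k1 Hk1], (Hpar t0 Ht0) as [k2 Hk2]. unfold w in *.
  exists (k1 - k2). lia.
Qed.

Lemma col_step_mul_crossings_even (c E : Z) :
  (forall u, (u <= L)%nat -> ~ on_trace z L N (fst (z u) + E, snd (z u))) ->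
  forall t, (t < L)%nat -> Z.Even (col_step z N c t * crossings z L N (c + E, snd (z t))).
Proof.
  intros Hoff t Ht. destruct (col_step_01 z N c t) as [Ec|Ec]; rewrite Ec; [exists 0; lia|].
  destruct (col_step_1 z N c t HN Ec) as [t' [m [Ht' [Ez _]]]].
  destruct (crossings_translate_even E Hoff t' ltac:(lia)) as [k Hk].
  rewrite Ez in Hk. cbn [fst snd] in Hk.
  replace (c + m * N + E) with (c + E + m * N) in Hk by ring.
  rewrite crossings_periodic in Hk. exists k. lia.
Qed.

Theorem cylinder_walk_meets_translate (D : Z) :
  exists u, (u <= L)%nat /\ on_trace z L N (fst (z u) + D, snd (z u)).
Proof.
  destruct (classic (exists u, (u <= L)%nat /\ on_trace z L N (fst (z u) + D, snd (z u))))
    as [Hmeet|Hapart]; [exact Hmeet|exfalso].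
  assert (HoffD : forall u, (u <= L)%nat -> ~ on_trace z L N (fst (z u) + D, snd (z u)))
    by (intros u Hu Hon; apply Hapart; now exists u).
  assert (HoffND : forall u, (u <= L)%nat -> ~ on_trace z L N (fst (z u) + - D, snd (z u))).
  { intros u Hu [t [m [Ht Hon]]]. injection Hon as Hx Hy.
    apply (HoffD t Ht). exists u, (- m). split; [exact Hu|]. f_equal; lia. }
  set (f := col_step z N (- D)). set (g := col_step z N 0). set (h := fun t => snd (z t)).
  assert (Hdisj : forall u t, (u < L)%nat -> (t < L)%nat -> f u <> 0 -> g t <> 0 -> h u <> h t).
  { intros u t Hu Ht Hfu Hgt Hh.
    destruct (col_step_01 z N (- D) u) as [Eu|Eu]; [contradiction|].
    destruct (col_step_01 z N 0 t) as [Et|Et]; [contradiction|].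
    destruct (col_step_1 z N _ u HN Eu) as [u' [m [Hu' [Ezu _]]]].
    destruct (col_step_1 z N _ t HN Et) as [t' [m' [Ht' [Ezt _]]]].
    apply (HoffD u' ltac:(lia)). exists t', (m - m'). split; [lia|].
    rewrite Ezu, Ezt. unfold h in Hh. cbn [fst snd]. f_equal; lia. }
  assert (Heven : Z.Even (zsum (fun u => f u * crossings z L N (0, h u)) L
                        + zsum (fun t => g t * crossings z L N (- D, h t)) L)).
  { destruct (zsum_even _ L (col_step_mul_crossings_even (- D) D HoffD)) as [k1 Hk1].
    destruct (zsum_even _ L (col_step_mul_crossings_even 0 (- D) HoffND)) as [k2 Hk2].
    replace (- D + D) with 0 in Hk1 by ring. replace (0 + - D) with (- D) in Hk2 by ring.
    exists (k1 + k2). unfold f, g, h. lia. }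
  assert (Hprod := zsum_pairs_by_height f g h L Hdisj).
  destruct (col_steps_odd (- D)) as [a Ha], (col_steps_odd 0) as [b Hb], Heven as [k Hk].
  assert (Hk' : zsum f L * zsum g L = 2 * k) by (rewrite <- Hprod; exact Hk).
  unfold f, g in Hk'. rewrite Ha, Hb in Hk'. lia.
Qed.

End Cylinder.

Lemma unit_not_multiple (j c : Z) : 2 <= j -> j * c <> 1.
Proof. intros Hj Hc. destruct (Z.lt_trichotomy c 0) as [|[|]]; nia. Qed.

Theorem walk_chord (L : nat) : forall (z : nat -> gauss) (D j : Z), 0 < D -> 1 <= j ->
  walk z L -> z L = (fst (z O) + j * D, snd (z O)) -> chord z L D.
Proof.
  induction L as [L IH] using (well_founded_induction lt_wf).
  intros z D j HD Hj Hw Hend.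
  destruct (Z.eq_dec j 1) as [->|Hj1].
  { exists L, O. split; [lia|split; [lia|]]. rewrite Hend. f_equal; ring. }
  assert (Hshort : forall a b c, (a <= L)%nat -> (b <= L)%nat ->
            (Nat.max a b - Nat.min a b < L)%nat -> 1 <= c ->
            z b = (fst (z a) + c * D, snd (z a)) -> chord z L D).
  { intros a b c Ha Hb Hlt Hc Hab.
    destruct (walk_segment z L a b Hw Ha Hb) as [z' [Hw' [Hz'0 [Hz'end Hrange]]]].
    destruct (IH _ Hlt z' D c HD Hc Hw') as [t [u [Ht [Hu Htu]]]].
    { rewrite Hz'end, Hz'0. exact Hab. }
    destruct (Hrange t Ht) as [t' [Ht' Et]], (Hrange u Hu) as [u' [Hu' Eu]].
    exists t', u'. rewrite <- Et, <- Eu. auto. }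
  destruct (cylinder_walk_meets_translate z L (j * D) ltac:(nia) Hw Hend D)
    as [u [Hu [t [m [Ht Hon]]]]].
  injection Hon as Hx Hy.
  destruct (Z.lt_trichotomy (m * j) 1) as [Hlt|[Heq|Hgt]].
  - destruct (Nat.eq_dec (Nat.max u t - Nat.min u t) L) as [Hwhole|Hpart].
    + exfalso. assert (Hut : (u = O /\ t = L \/ u = L /\ t = O)%nat) by lia.
      destruct Hut as [[-> ->]|[-> ->]]; rewrite Hend in *; cbn [fst snd] in *.
      * apply (unit_not_multiple j (m + 1)); [lia|]. nia.
      * apply (unit_not_multiple j (m - 1)); [lia|]. nia.
    + apply (Hshort u t (1 - m * j)); try lia. rewrite (surjective_pairing (z t)). f_equal; lia.
  - exfalso. apply (unit_not_multiple j m); lia.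
  - destruct (Nat.eq_dec (Nat.max t u - Nat.min t u) L) as [Hwhole|Hpart].
    + exfalso. assert (Htu : (t = O /\ u = L \/ t = L /\ u = O)%nat) by lia.
      destruct Htu as [[-> ->]|[-> ->]]; rewrite Hend in *; cbn [fst snd] in *.
      * apply (unit_not_multiple j (m - 1)); [lia|]. nia.
      * apply (unit_not_multiple j (m + 1)); [lia|]. nia.
    + apply (Hshort t u (m * j - 1)); try lia. rewrite (surjective_pairing (z u)). f_equal; lia.
Qed.

(* The walk [f] scaled by [k], each of its steps being subdivided into [k] unit steps. *)
Definition refine (k : nat) (f : nat -> gauss) (m : nat) : gauss :=
  let q := (m / k)%nat in
  let r := Z.of_nat (m mod k) in
  (Z.of_nat k * fst (f q) + r * (fst (f (S q)) - fst (f q)),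
   Z.of_nat k * snd (f q) + r * (snd (f (S q)) - snd (f q))).

Lemma refine_at_multiple (k : nat) (f : nat -> gauss) (q : nat) : (1 <= k)%nat ->
  refine k f (k * q) = (Z.of_nat k * fst (f q), Z.of_nat k * snd (f q)).
Proof.
  intros Hk. unfold refine.
  rewrite Nat.mul_comm, Nat.div_mul, Nat.Div0.mod_mul by lia. cbn. f_equal; ring.
Qed.

Lemma refine_walk (k : nat) (f : nat -> gauss) (L : nat) : (1 <= k)%nat ->
  walk f L -> walk (refine k f) (k * L).
Proof.
  intros Hk Hw m Hm.
  pose proof (Nat.div_mod_eq m k) as Hdm. pose proof (Nat.mod_upper_bound m k ltac:(lia)) as Hb.
  set (q := (m / k)%nat) in *. set (r := (m mod k)%nat) in *.
  assert (Hq : (q < L)%nat) by nia.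
  pose proof (Hw q Hq) as Hs. unfold unit_step, gsub, refine in *. fold q r.
  destruct (Nat.eq_dec (S r) k) as [E|E].
  - rewrite <- (Nat.div_unique (S m) k (S q) 0), <- (Nat.mod_unique (S m) k (S q) 0) by lia.
    replace (Z.of_nat r) with (Z.of_nat k - 1) by lia. cbn [fst snd].
    match goal with |- gnorm2 (?a, ?b) = 1 =>
      replace a with (fst (f (S q)) - fst (f q)) by ring;
      replace b with (snd (f (S q)) - snd (f q)) by ring end.
    exact Hs.
  - rewrite <- (Nat.div_unique (S m) k q (S r)), <- (Nat.mod_unique (S m) k q (S r)) by lia.
    rewrite Nat2Z.inj_succ. cbn [fst snd].
    match goal with |- gnorm2 (?a, ?b) = 1 =>
      replace a with (fst (f (S q)) - fst (f q)) by ring;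
      replace b with (snd (f (S q)) - snd (f q)) by ring end.
    exact Hs.
Qed.

Lemma refine_point (k : nat) (f : nat -> gauss) (L m : nat) : (1 <= k)%nat ->
  walk f L -> (m <= k * L)%nat ->
  exists F ux uy r, (ux = 1 /\ uy = 0 \/ ux = 0 /\ uy = 1) /\ 0 <= r < Z.of_nat k /\
    refine k f m = (Z.of_nat k * fst F + r * ux, Z.of_nat k * snd F + r * uy) /\
    (exists q, (q <= L)%nat /\ f q = F) /\
    (0 < r -> exists q, (q <= L)%nat /\ f q = (fst F + ux, snd F + uy)).
Proof.
  intros Hk Hw Hm.
  pose proof (Nat.div_mod_eq m k) as Hdm. pose proof (Nat.mod_upper_bound m k ltac:(lia)) as Hb.
  unfold refine. set (q := (m / k)%nat) in *. set (r := (m mod k)%nat) in *.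
  assert (Hq : (q <= L)%nat) by nia.
  destruct (Nat.eq_dec r O) as [Hr0|Hr0].
  { exists (f q), 1, 0, 0. rewrite Hr0.
    split; [lia|split; [lia|split; [cbn [fst snd]; f_equal; ring|split; [now exists q | lia]]]]. }
  assert (Hq' : (q < L)%nat) by nia.
  destruct (f q) as [a b] eqn:Ef.
  destruct (unit_step_cases _ _ (Hw q Hq')) as [E|[E|[E|E]]]; rewrite Ef in E; rewrite E;
    cbn [fst snd].
  - exists (a, b), 1, 0, (Z.of_nat r).
    split; [lia|split; [lia|split; [cbn [fst snd]; f_equal; ring|split; [now exists q|]]]].
    intros _. exists (S q). split; [lia|]. rewrite E. cbn [fst snd]. f_equal; ring.
  - exists (a - 1, b), 1, 0, (Z.of_nat k - Z.of_nat r).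
    split; [lia|split; [lia|split; [cbn [fst snd]; f_equal; ring|split]]].
    { exists (S q). split; [lia|exact E]. }
    intros _. exists q. split; [lia|]. rewrite Ef. cbn [fst snd]. f_equal; ring.
  - exists (a, b), 0, 1, (Z.of_nat r).
    split; [lia|split; [lia|split; [cbn [fst snd]; f_equal; ring|split; [now exists q|]]]].
    intros _. exists (S q). split; [lia|]. rewrite E. cbn [fst snd]. f_equal; ring.
  - exists (a, b - 1), 0, 1, (Z.of_nat k - Z.of_nat r).
    split; [lia|split; [lia|split; [cbn [fst snd]; f_equal; ring|split]]].
    { exists (S q). split; [lia|exact E]. }
    intros _. exists q. split; [lia|]. rewrite Ef. cbn [fst snd]. f_equal; ring.
Qed.

Lemma round_to_chord (k n d X Y r r' ux uy ux' uy' : Z) :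
  0 < k -> 0 <= r < k -> 0 <= r' < k ->
  (ux = 1 /\ uy = 0 \/ ux = 0 /\ uy = 1) -> (ux' = 1 /\ uy' = 0 \/ ux' = 0 /\ uy' = 1) ->
  k * (d - 1) < n < k * (d + 1) ->
  k * X + r * ux - r' * ux' = n -> k * Y + r * uy - r' * uy' = 0 ->
  Y = 0 /\ (X = d \/ (X = d - 1 /\ 0 < r /\ ux = 1 /\ uy = 0)
                  \/ (X = d + 1 /\ 0 < r' /\ ux' = 1 /\ uy' = 0)).
Proof.
  intros Hk Hr Hr' Hu Hu' Hn Ex Ey.
  assert (HY : Y = 0) by (destruct Hu as [[-> ->]|[-> ->]], Hu' as [[-> ->]|[-> ->]]; nia).
  subst Y. split; [reflexivity|].
  destruct Hu as [[-> ->]|[-> ->]], Hu' as [[-> ->]|[-> ->]]; nia.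
Qed.

Lemma walk_chord_rounded (f : nat -> gauss) (L k : nat) (n d : Z) :
  (1 <= k)%nat -> 0 < n -> walk f L -> f L = (fst (f O) + n, snd (f O)) ->
  Z.of_nat k * (d - 1) < n < Z.of_nat k * (d + 1) -> chord f L d.
Proof.
  intros Hk Hn Hw Hend Hkd.
  assert (Hrend : refine k f (k * L) =
            (fst (refine k f O) + Z.of_nat k * n, snd (refine k f O))).
  { replace (refine k f O) with (refine k f (k * 0)) by (f_equal; lia).
    rewrite !refine_at_multiple, Hend by exact Hk.
    cbn [fst snd]. f_equal; ring. }
  destruct (walk_chord (k * L) (refine k f) n (Z.of_nat k) Hn ltac:(lia)
              (refine_walk k f L Hk Hw) Hrend) as [t [u [Ht [Hu Htu]]]].
  destruct (refine_point k f L t Hk Hw Ht)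
    as [F [ux [uy [r [Hdir [Hr [EF [[p [Hp Ep]] HF']]]]]]]].
  destruct (refine_point k f L u Hk Hw Hu)
    as [G [ux' [uy' [r' [Hdir' [Hr' [EG [[q [Hq Eq]] HG']]]]]]]].
  rewrite EF, EG in Htu. injection Htu as Ex Ey.
  destruct (round_to_chord (Z.of_nat k) n d (fst F - fst G) (snd F - snd G) r r' ux uy ux' uy')
    as [HY [HX|[[HX [Hr0 [-> ->]]]|[HX [Hr0 [-> ->]]]]]]; try lia.
  - exists p, q. split; [lia|split; [lia|]]. rewrite Ep, Eq.
    rewrite (surjective_pairing F). f_equal; lia.
  - destruct (HF' Hr0) as [p' [Hp' Ep']].
    exists p', q. split; [lia|split; [lia|]]. rewrite Ep', Eq. f_equal; lia.
  - destruct (HG' Hr0) as [q' [Hq' Eq']].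
    exists p, q'. split; [lia|split; [lia|]]. rewrite Ep, Eq'. cbn [fst snd].
    rewrite (surjective_pairing F). f_equal; lia.
Qed.

(* With q = n / d, the scale k = q works when n mod d < q and k = q + 1 when
   n mod d >= d - q; otherwise e := d - q - 1 >= q and d^2 - 2n >= e^2 - q^2 + 1 > 0. *)
Lemma exists_scale (n d : Z) : 1 <= n -> 1 <= d -> d * d <= 2 * n ->
  exists k, 1 <= k /\ k * (d - 1) < n < k * (d + 1).
Proof.
  intros Hn Hd Hdd.
  pose proof (Z.div_mod n d ltac:(lia)) as Hqr. pose proof (Z.mod_pos_bound n d ltac:(lia)) as Hb.
  set (q := n / d) in *. set (r := n mod d) in *.
  assert (0 <= q) by nia.
  destruct (Z.lt_ge_cases r q).
  - exists q. split; [lia|]. split; nia.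
  - destruct (Z.le_gt_cases (d - r) q).
    + exists (q + 1). split; [lia|]. split; nia.
    + exfalso. nia.
Qed.

Theorem mainTheorem4 (n d : nat) :
  (0 < n)%nat -> (0 < d)%nat -> (d * d <= 2 * n)%nat -> A n d.
Proof.
  intros Hn Hd Hdd. split; [exact Hd|].
  intros [w [[Hne Hstep] [[r [s [Hr [Hs Hrs]]]] Hav]]].
  assert (Hw : walk (gat w) (length w - 1)) by (intros t Ht; apply Hstep; lia).
  destruct (walk_segment (gat w) (length w - 1) s r Hw ltac:(lia) ltac:(lia))
    as [f [Hf [Hf0 [Hfend Hrange]]]].
  set (L := (Nat.max s r - Nat.min s r)%nat) in *.
  destruct (exists_scale (Z.of_nat n) (Z.of_nat d)) as [k [Hk Hkd]]; try lia.
  assert (Hfn : f L = (fst (f O) + Z.of_nat n, snd (f O))).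
  { rewrite Hfend, Hf0. unfold gsub, gnat in Hrs. injection Hrs as Hx Hy.
    rewrite (surjective_pairing (gat w r)). f_equal; lia. }
  destruct (walk_chord_rounded f L (Z.to_nat k) (Z.of_nat n) (Z.of_nat d)
              ltac:(lia) ltac:(lia) Hf Hfn ltac:(rewrite Z2Nat.id by lia; exact Hkd))
    as [a [b [Ha [Hb Hab]]]].
  destruct (Hrange a Ha) as [ia [Hia Ea]], (Hrange b Hb) as [ib [Hib Eb]].
  apply (Hav ia ib ltac:(lia) ltac:(lia)).
  rewrite <- Ea, <- Eb, Hab. unfold gsub, gnat. cbn [fst snd]. f_equal; ring.
Qed.
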